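(* Let $(P)$ be a Banach space property (a class of Banach spaces closed under topological isomorphism). Let $X$ and $Y$ be Banach spaces and let $T\in B(X)$ and $S\in B(Y)$ be equivalent after extension, with $S$ compact. Suppose that $X$ transfers property $(P)$ to closed subspaces and that $(P)$ is preserved under direct sums with finite dimensional spaces. Then $Y$ has property $(P)$.
   Context: All Banach spaces are complex; $B(X,Y)$ denotes bounded linear operators; invertibility means bounded inverse; $X\oplus Y$ is the $\ell^2$-direct sum and $\mathrm{id}_X$ the identity. Operators $T\in B(X)$ and $S\in B(Y)$ are equivalent after extension if there exist Banach spaces $X'$, $Y'$ and invertible $E\in B(Y\oplus Y',X\oplus X')$, $F\in B(X\oplus X',Y\oplus Y')$ with $\begin{bmatrix}T&0\\0&\mathrm{id}_{X'}\end{bmatrix}=E\begin{bmatrix}S&0\\0&\mathrm{id}_{Y'}\end{bmatrix}F$. $X$ transfers property $(P)$ to closed subspaces if every closed subspace of $X$ has $(P)$. $(P)$ is preserved under direct sums with finite dimensional spaces if $Y\oplus Z$ has $(P)$ whenever $Y$ has $(P)$ and $Z$ is finite dimensional. *)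

From Stdlib Require Import Reals Lra Psatz ProofIrrelevance.
Open Scope R_scope.

Record C := mkC { Re : R; Im : R }.
Definition Cadd (z w : C) : C := mkC (Re z + Re w) (Im z + Im w).
Definition Cmul (z w : C) : C :=
  mkC (Re z * Re w - Im z * Im w) (Re z * Im w + Im z * Re w).
Definition C0 : C := mkC 0 0.
Definition C1 : C := mkC 1 0.
Definition Cnorm (z : C) : R := sqrt (Re z ^ 2 + Im z ^ 2).

Lemma Cnorm_ge0 z : 0 <= Cnorm z.
Proof. apply sqrt_pos. Qed.

Record Banach := {
  car :> Type;
  bzero : car;
  badd : car -> car -> car;
  bopp : car -> car;
  bscal : C -> car -> car;
  bnorm : car -> R;
  badd_assoc : forall x y z, badd x (badd y z) = badd (badd x y) z;
  badd_comm : forall x y, badd x y = badd y x;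
  badd_0 : forall x, badd bzero x = x;
  badd_opp : forall x, badd x (bopp x) = bzero;
  bscal_assoc : forall a b x, bscal a (bscal b x) = bscal (Cmul a b) x;
  bscal_1 : forall x, bscal C1 x = x;
  bscal_addl : forall a b x, bscal (Cadd a b) x = badd (bscal a x) (bscal b x);
  bscal_addr : forall a x y, bscal a (badd x y) = badd (bscal a x) (bscal a y);
  bnorm_ge0 : forall x, 0 <= bnorm x;
  bnorm_eq0 : forall x, bnorm x = 0 -> x = bzero;
  bnorm_scal : forall a x, bnorm (bscal a x) = Cnorm a * bnorm x;
  bnorm_tri : forall x y, bnorm (badd x y) <= bnorm x + bnorm y;
  bcomplete : forall u : nat -> car,
    (forall eps, 0 < eps -> exists N, forall m n, (N <= m)%nat -> (N <= n)%nat ->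
        bnorm (badd (u m) (bopp (u n))) < eps) ->
    exists l, forall eps, 0 < eps -> exists N, forall n, (N <= n)%nat ->
        bnorm (badd (u n) (bopp l)) < eps
}.

Arguments bzero {b0}. Arguments badd {b0}. Arguments bopp {b0}.
Arguments bscal {b0}. Arguments bnorm {b0}.

Definition converges {X : Banach} (u : nat -> X) (l : X) : Prop :=
  forall eps, 0 < eps -> exists N, forall n, (N <= n)%nat ->
    bnorm (badd (u n) (bopp l)) < eps.

Lemma le_l2 a b : 0 <= a -> a <= sqrt (a ^ 2 + b ^ 2).
Proof.
  intros Ha. rewrite <- (sqrt_pow2 a Ha) at 1. apply sqrt_le_1_alt. nra.
Qed.

Lemma l2_le_sum a b : 0 <= a -> 0 <= b -> sqrt (a ^ 2 + b ^ 2) <= a + b.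
Proof.
  intros Ha Hb. rewrite <- (sqrt_pow2 (a + b)) by lra. apply sqrt_le_1_alt. nra.
Qed.

Lemma l2_tri p q a b a' b' :
  0 <= p -> 0 <= q -> 0 <= a -> 0 <= b -> 0 <= a' -> 0 <= b' ->
  p <= a + a' -> q <= b + b' ->
  sqrt (p ^ 2 + q ^ 2) <= sqrt (a ^ 2 + b ^ 2) + sqrt (a' ^ 2 + b' ^ 2).
Proof.
  intros Hp Hq Ha Hb Ha' Hb' H1 H2.
  set (s := sqrt (a ^ 2 + b ^ 2)). set (t := sqrt (a' ^ 2 + b' ^ 2)).
  assert (Hs : 0 <= s) by apply sqrt_pos.
  assert (Ht : 0 <= t) by apply sqrt_pos.
  assert (Hs2 : s ^ 2 = a ^ 2 + b ^ 2) by (apply pow2_sqrt; nra).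
  assert (Ht2 : t ^ 2 = a' ^ 2 + b' ^ 2) by (apply pow2_sqrt; nra).
  assert (Hst : a * a' + b * b' <= s * t).
  { destruct (Rle_lt_dec (a * a' + b * b') (s * t)) as [H|H]; [exact H|].
    exfalso.
    assert (Hpos : 0 <= s * t) by (apply Rmult_le_pos; assumption).
    assert (Hsq : (s * t) ^ 2 < (a * a' + b * b') ^ 2).
    { set (u := s * t) in *. set (w := a * a' + b * b') in *. simpl. nra. }
    assert ((s * t) ^ 2 = (a ^ 2 + b ^ 2) * (a' ^ 2 + b' ^ 2)).
    { rewrite Rpow_mult_distr, Hs2, Ht2. reflexivity. }
    assert (Hcs : (a * a' + b * b') ^ 2 <= (a ^ 2 + b ^ 2) * (a' ^ 2 + b' ^ 2)).
    { assert (0 <= (a * b' - b * a') ^ 2) by apply pow2_ge_0. simpl in *. nra. }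
    lra. }
  rewrite <- (sqrt_pow2 (s + t)) by lra. apply sqrt_le_1_alt. nra.
Qed.

Section DSum.
Variables X Y : Banach.

Definition dnorm (p : X * Y) : R := sqrt (bnorm (fst p) ^ 2 + bnorm (snd p) ^ 2).

Definition dsum : Banach.
Proof.
  refine (@Build_Banach (X * Y)%type (bzero, bzero)
    (fun p q => (badd (fst p) (fst q), badd (snd p) (snd q)))
    (fun p => (bopp (fst p), bopp (snd p)))
    (fun a p => (bscal a (fst p), bscal a (snd p)))
    dnorm _ _ _ _ _ _ _ _ _ _ _ _ _).
  - intros [] [] []; simpl; f_equal; apply badd_assoc.
  - intros [] []; simpl; f_equal; apply badd_comm.
  - intros []; simpl; f_equal; apply badd_0.
  - intros []; simpl; f_equal; apply badd_opp.
  - intros a b []; simpl; f_equal; apply bscal_assoc.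
  - intros []; simpl; f_equal; apply bscal_1.
  - intros a b []; simpl; f_equal; apply bscal_addl.
  - intros a [] []; simpl; f_equal; apply bscal_addr.
  - intros; apply sqrt_pos.
  - intros [x y]; unfold dnorm; cbn [fst snd]; intros H.
    pose proof (bnorm_ge0 X x). pose proof (bnorm_ge0 Y y).
    apply sqrt_eq_0 in H; [|nra].
    f_equal; apply bnorm_eq0; nra.
  - intros a [x y]; unfold dnorm; cbn [fst snd].
    rewrite !bnorm_scal, !Rpow_mult_distr, <- Rmult_plus_distr_l.
    rewrite sqrt_mult_alt by (apply pow2_ge_0).
    rewrite sqrt_pow2 by apply Cnorm_ge0. reflexivity.
  - intros [x y] [x' y']; unfold dnorm; cbn [fst snd].
    apply l2_tri; try apply bnorm_ge0; apply bnorm_tri.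
  - intros u Hu.
    assert (HX : exists l, converges (fun n => fst (u n)) l).
    { apply bcomplete. intros eps He. destruct (Hu eps He) as [N HN].
      exists N. intros m n Hm Hn. eapply Rle_lt_trans; [|apply (HN m n Hm Hn)].
      unfold dnorm; cbn [fst snd]. apply le_l2, bnorm_ge0. }
    assert (HY : exists l, converges (fun n => snd (u n)) l).
    { apply bcomplete. intros eps He. destruct (Hu eps He) as [N HN].
      exists N. intros m n Hm Hn. eapply Rle_lt_trans; [|apply (HN m n Hm Hn)].
      unfold dnorm; cbn [fst snd]. rewrite Rplus_comm. apply le_l2, bnorm_ge0. }
    destruct HX as [l1 H1]. destruct HY as [l2 H2].
    exists (l1, l2). intros eps He.
    destruct (H1 (eps / 2)) as [N1 HN1]; [lra|].
    destruct (H2 (eps / 2)) as [N2 HN2]; [lra|].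
    exists (N1 + N2)%nat. intros n Hn.
    specialize (HN1 n ltac:(lia)). specialize (HN2 n ltac:(lia)).
    unfold dnorm; cbn [fst snd].
    eapply Rle_lt_trans; [apply l2_le_sum; apply bnorm_ge0|]. lra.
Defined.
End DSum.

Record ClosedSubspace (X : Banach) := {
  smem : X -> Prop;
  smem_0 : smem bzero;
  smem_add : forall x y, smem x -> smem y -> smem (badd x y);
  smem_scal : forall a x, smem x -> smem (bscal a x);
  smem_closed : forall (u : nat -> X) l, (forall n, smem (u n)) -> converges u l -> smem l
}.
Arguments smem {X}.

Lemma badd_cancel (X : Banach) (x y z : X) : badd x z = badd y z -> x = y.
Proof.
  intros H.
  assert (E : badd (badd x z) (bopp z) = badd (badd y z) (bopp z)) by (rewrite H; reflexivity).
  rewrite <- !badd_assoc, badd_opp, !(badd_comm _ _ bzero), !badd_0 in E. exact E.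
Qed.

Lemma bscal_0 (X : Banach) (x : X) : bscal C0 x = bzero.
Proof.
  apply (badd_cancel X _ _ (bscal C0 x)). rewrite <- bscal_addl, badd_0.
  unfold Cadd, C0; simpl. rewrite Rplus_0_l. reflexivity.
Qed.

Lemma bopp_scal (X : Banach) (x : X) : bopp x = bscal (mkC (-1) 0) x.
Proof.
  apply (badd_cancel X _ _ x). rewrite (badd_comm _ (bopp x)), badd_opp.
  rewrite <- (bscal_1 X x) at 2. rewrite <- bscal_addl.
  unfold Cadd, C1; simpl.
  replace (-1 + 1) with 0 by lra. replace (0 + 0) with 0 by lra.
  symmetry. apply bscal_0.
Qed.

Lemma smem_opp (X : Banach) (M : ClosedSubspace X) x : smem M x -> smem M (bopp x).
Proof. intros H; rewrite bopp_scal; apply smem_scal, H. Qed.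

Lemma sig_eq {A : Type} {P : A -> Prop} (a b : {x : A | P x}) :
  proj1_sig a = proj1_sig b -> a = b.
Proof.
  destruct a as [a Ha], b as [b Hb]; simpl; intros ->.
  f_equal; apply proof_irrelevance.
Qed.

Section Sub.
Variables (X : Banach) (M : ClosedSubspace X).

Definition subBanach : Banach.
Proof.
  refine (@Build_Banach {x : X | smem M x}
    (exist _ bzero (smem_0 X M))
    (fun p q => exist _ (badd (proj1_sig p) (proj1_sig q))
                  (smem_add X M _ _ (proj2_sig p) (proj2_sig q)))
    (fun p => exist _ (bopp (proj1_sig p)) (smem_opp X M _ (proj2_sig p)))
    (fun a p => exist _ (bscal a (proj1_sig p)) (smem_scal X M a _ (proj2_sig p)))
    (fun p => bnorm (proj1_sig p)) _ _ _ _ _ _ _ _ _ _ _ _ _).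
  - intros; apply sig_eq; simpl; apply badd_assoc.
  - intros; apply sig_eq; simpl; apply badd_comm.
  - intros; apply sig_eq; simpl; apply badd_0.
  - intros; apply sig_eq; simpl; apply badd_opp.
  - intros; apply sig_eq; simpl; apply bscal_assoc.
  - intros; apply sig_eq; simpl; apply bscal_1.
  - intros; apply sig_eq; simpl; apply bscal_addl.
  - intros; apply sig_eq; simpl; apply bscal_addr.
  - intros; apply bnorm_ge0.
  - intros [z Hz] H; apply sig_eq; simpl; apply bnorm_eq0, H.
  - intros; simpl; apply bnorm_scal.
  - intros; simpl; apply bnorm_tri.
  - intros u Hu.
    destruct (bcomplete X (fun n => proj1_sig (u n)) Hu) as [l Hl].
    assert (Hm : smem M l).
    { apply (smem_closed X M (fun n => proj1_sig (u n))); [intros n; apply proj2_sig | exact Hl]. }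
    exists (exist _ l Hm). exact Hl.
Defined.
End Sub.

Definition bounded_linear {X Y : Banach} (f : X -> Y) : Prop :=
  (forall x y, f (badd x y) = badd (f x) (f y)) /\
  (forall a x, f (bscal a x) = bscal a (f x)) /\
  (exists M : R, forall x, bnorm (f x) <= M * bnorm x).

Definition invertible {X Y : Banach} (f : X -> Y) : Prop :=
  bounded_linear f /\
  exists g : Y -> X, bounded_linear g /\ (forall x, g (f x) = x) /\ (forall y, f (g y) = y).

Definition isomorphic (X Y : Banach) : Prop := exists f : X -> Y, invertible f.

Definition compact_op {X Y : Banach} (K : X -> Y) : Prop :=
  forall u : nat -> X, (forall n, bnorm (u n) <= 1) ->
    exists phi : nat -> nat, (forall n, (phi n < phi (S n))%nat) /\
      exists l : Y, converges (fun n => K (u (phi n))) l.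

Fixpoint lincomb {X : Banach} (n : nat) (c : nat -> C) (v : nat -> X) : X :=
  match n with
  | O => bzero
  | S k => badd (lincomb k c v) (bscal (c k) (v k))
  end.

Definition finite_dimensional (Z : Banach) : Prop :=
  exists (n : nat) (v : nat -> Z), forall z : Z, exists c : nat -> C, z = lincomb n c v.

Definition banach_property (P : Banach -> Prop) : Prop :=
  forall X Y : Banach, isomorphic X Y -> P X -> P Y.

Definition transfers_to_closed_subspaces (P : Banach -> Prop) (X : Banach) : Prop :=
  forall M : ClosedSubspace X, P (subBanach X M).

Definition preserved_under_findim_sums (P : Banach -> Prop) : Prop :=
  forall Y Z : Banach, P Y -> finite_dimensional Z -> P (dsum Y Z).

Definition equivalent_after_extension {X Y : Banach} (T : X -> X) (S : Y -> Y) : Prop :=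
  exists (X' Y' : Banach) (E : dsum Y Y' -> dsum X X') (F : dsum X X' -> dsum Y Y'),
    invertible E /\ invertible F /\
    forall p : dsum X X',
      ((T (fst p), snd p) : dsum X X') =
      E (let q := F p in ((S (fst q), snd q) : dsum Y Y')).

(** Unwinding the equivalence after extension, [I - K] factors through [X] as [L o a] with
    [K] compact. By Riesz theory, some power [B = (I - K)^q] has ascent and descent at most
    one, so [Y] is the direct sum of the closed range [R] of [B] and the finite-dimensional
    kernel of [B], and [B] is bounded below on [R]. Since [B] factors through [a] as well,
    [a] is bounded below on [R], hence maps [R] isomorphically onto a closed subspace of [X].
    Thus [Y] is isomorphic to (a closed subspace of [X]) (+) (a finite-dimensional space). *)

From Pilot Require Import Defs.
From Stdlib Require Import Reals Lra Lia Psatz Arith Classical ClassicalEpsilon.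
Open Scope R_scope.

Notation "x +: y" := (badd x y) (at level 50, left associativity).
Notation "x -: y" := (badd x (bopp y)) (at level 50, left associativity).
Notation "-: x" := (bopp x) (at level 35, x at level 35, right associativity).

Definition Copp (z : Defs.C) : Defs.C := mkC (- Re z) (- Im z).

Definition rscal {X : Banach} (r : R) (x : X) : X := bscal (mkC r 0) x.

Section Algebra.
Context {X : Banach}.
Implicit Types x y z w : X.

Lemma addr0 x : x +: bzero = x.
Proof. rewrite badd_comm; apply badd_0. Qed.
Lemma addNr x : -: x +: x = bzero.
Proof. rewrite badd_comm; apply badd_opp. Qed.
Lemma subrr x : x -: x = bzero.
Proof. apply badd_opp. Qed.
Lemma oppK x : -: -: x = x.
Proof. apply (badd_cancel X _ _ (-: x)). rewrite addNr, badd_opp. reflexivity. Qed.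
Lemma opp0 : -: (@bzero X) = bzero.
Proof. apply (badd_cancel X _ _ bzero). rewrite addNr, addr0. reflexivity. Qed.
Lemma subr0 x : x -: bzero = x.
Proof. rewrite opp0; apply addr0. Qed.
Lemma addrK x y : x +: y -: y = x.
Proof. rewrite <- badd_assoc, badd_opp, addr0. reflexivity. Qed.
Lemma subrK x y : x -: y +: y = x.
Proof. rewrite <- badd_assoc, addNr, addr0. reflexivity. Qed.
Lemma addKr x y : x +: y -: x = y.
Proof. rewrite (badd_comm X x y), addrK. reflexivity. Qed.
Lemma subKr x y : x +: (y -: x) = y.
Proof. rewrite badd_comm, subrK. reflexivity. Qed.
Lemma subr_eq0 x y : x -: y = bzero -> x = y.
Proof. intros H. rewrite <- (subrK x y), H, badd_0. reflexivity. Qed.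

Lemma oppD x y : -: (x +: y) = -: x +: -: y.
Proof.
  apply (badd_cancel X _ _ (x +: y)). rewrite addNr.
  rewrite (badd_comm X x y), badd_assoc, <- (badd_assoc X (-: x)), addNr, addr0, addNr.
  reflexivity.
Qed.
Lemma opp_sub x y : -: (x -: y) = y -: x.
Proof. rewrite oppD, oppK, badd_comm. reflexivity. Qed.
Lemma sub_sub x y : x -: (x -: y) = y.
Proof. rewrite opp_sub. apply subKr. Qed.
Lemma sub_add x y z : x -: (y +: z) = x -: y -: z.
Proof. rewrite oppD, badd_assoc. reflexivity. Qed.
Lemma addACA x y z w : (x +: y) +: (z +: w) = (x +: z) +: (y +: w).
Proof.
  rewrite <- !badd_assoc. f_equal.
  rewrite !badd_assoc. f_equal. apply badd_comm.
Qed.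
Lemma add_sub4 x y z w : (x +: y) -: (z +: w) = (x -: z) +: (y -: w).
Proof. rewrite oppD. apply addACA. Qed.

Lemma bscal0r a : bscal a (@bzero X) = bzero.
Proof.
  apply (badd_cancel X _ _ (bscal a bzero)). rewrite <- bscal_addr, !badd_0. reflexivity.
Qed.
Lemma bscal_opp a x : bscal a (-: x) = -: bscal a x.
Proof.
  apply (badd_cancel X _ _ (bscal a x)). rewrite addNr, <- bscal_addr, addNr, bscal0r.
  reflexivity.
Qed.
Lemma bscal_sub a x y : bscal a (x -: y) = bscal a x -: bscal a y.
Proof. rewrite bscal_addr, bscal_opp. reflexivity. Qed.
Lemma bscal_subl a b x :
  bscal (Cadd a (Copp b)) x = bscal a x -: bscal b x.
Proof.
  rewrite bscal_addl. f_equal.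
  apply (badd_cancel X _ _ (bscal b x)). rewrite addNr, <- bscal_addl.
  unfold Cadd, Copp; simpl. replace (- Re b + Re b) with 0 by lra. replace (- Im b + Im b) with 0 by lra.
  apply bscal_0.
Qed.

Lemma rscal_rscal r s x : rscal r (rscal s x) = rscal (r * s) x.
Proof. unfold rscal. rewrite bscal_assoc. f_equal. unfold Cmul; simpl. f_equal; ring. Qed.
Lemma rscal1 x : rscal 1 x = x.
Proof. apply bscal_1. Qed.

Lemma norm0 : bnorm (@bzero X) = 0.
Proof.
  rewrite <- (bscal_0 X bzero), bnorm_scal. unfold Cnorm, C0; cbn [Re Im].
  replace (0 ^ 2 + 0 ^ 2) with 0 by ring. rewrite sqrt_0. ring.
Qed.
Lemma norm_rscal r x : bnorm (rscal r x) = Rabs r * bnorm x.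
Proof.
  unfold rscal. rewrite bnorm_scal. unfold Cnorm; cbn [Re Im].
  replace (r ^ 2 + 0 ^ 2) with (Rsqr r) by (unfold Rsqr; ring). rewrite sqrt_Rsqr_abs.
  reflexivity.
Qed.
Lemma norm_opp x : bnorm (-: x) = bnorm x.
Proof.
  rewrite bopp_scal. change (bnorm (rscal (-1) x) = bnorm x).
  rewrite norm_rscal, Rabs_left by lra. ring.
Qed.
Lemma norm_sym x y : bnorm (x -: y) = bnorm (y -: x).
Proof. rewrite <- opp_sub, norm_opp. reflexivity. Qed.
Lemma norm_tri3 x y z : bnorm (x -: z) <= bnorm (x -: y) + bnorm (y -: z).
Proof.
  replace (x -: z) with ((x -: y) +: (y -: z)); [apply bnorm_tri|].
  rewrite <- badd_assoc, (badd_assoc X (-: y)), addNr, badd_0. reflexivity.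
Qed.
Lemma norm_sub_le x y : bnorm (x -: y) <= bnorm x + bnorm y.
Proof. rewrite <- (norm_opp y). apply bnorm_tri. Qed.
Lemma norm_rev x y : bnorm x - bnorm y <= bnorm (x -: y).
Proof. pose proof (norm_tri3 x y bzero). rewrite !subr0 in H. lra. Qed.
Lemma norm_eq0_sub x y : bnorm (x -: y) = 0 -> x = y.
Proof. intros H. apply subr_eq0, bnorm_eq0, H. Qed.

Lemma norm_normalize x : 0 < bnorm x -> bnorm (rscal (/ bnorm x) x) = 1.
Proof.
  intros Hx. rewrite norm_rscal, Rabs_right by (apply Rle_ge, Rlt_le, Rinv_0_lt_compat; lra).
  field. lra.
Qed.
End Algebra.

Definition increasing (phi : nat -> nat) := forall n, (phi n < phi (S n))%nat.

Lemma increasing_lt phi : increasing phi -> forall m n, (m < n)%nat -> (phi m < phi n)%nat.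
Proof. intros H m n Hmn. induction Hmn; [apply H|]. specialize (H m0). lia. Qed.
Lemma increasing_ge phi : increasing phi -> forall n, (n <= phi n)%nat.
Proof. intros H n. induction n; [lia|]. specialize (H n). lia. Qed.
Lemma increasing_comp phi psi :
  increasing phi -> increasing psi -> increasing (fun n => phi (psi n)).
Proof. intros H1 H2 n. apply increasing_lt; auto. Qed.

Section Convergence.
Context {X : Banach}.
Implicit Types u v : nat -> X. Implicit Types l m : X.

Lemma converges_unique u l l' : converges u l -> converges u l' -> l = l'.
Proof.
  intros H1 H2. apply norm_eq0_sub.
  destruct (Rle_lt_or_eq_dec 0 _ (bnorm_ge0 _ (l -: l'))) as [Hp|Hp]; [|auto].
  exfalso. set (e := bnorm (l -: l')) in *.
  destruct (H1 (e/2)) as [N1 HN1]; [lra|]. destruct (H2 (e/2)) as [N2 HN2]; [lra|].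
  specialize (HN1 (N1+N2)%nat ltac:(lia)). specialize (HN2 (N1+N2)%nat ltac:(lia)).
  pose proof (norm_tri3 l (u (N1+N2)%nat) l'). rewrite (norm_sym l (u _)) in H.
  unfold e in *. lra.
Qed.

Lemma converges_const l : converges (fun _ => l) l.
Proof. intros e He. exists O. intros n _. rewrite subrr, norm0. exact He. Qed.

Lemma converges_ext u v l : (forall n, u n = v n) -> converges u l -> converges v l.
Proof.
  intros E H e He. destruct (H e He) as [N HN]. exists N. intros n Hn. rewrite <- E. auto.
Qed.

Lemma converges_add u v l m : converges u l -> converges v m ->
  converges (fun n => u n +: v n) (l +: m).
Proof.
  intros H1 H2 e He.
  destruct (H1 (e/2)) as [N1 HN1]; [lra|]. destruct (H2 (e/2)) as [N2 HN2]; [lra|].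
  exists (N1+N2)%nat. intros n Hn. rewrite add_sub4.
  specialize (HN1 n ltac:(lia)). specialize (HN2 n ltac:(lia)).
  eapply Rle_lt_trans; [apply bnorm_tri|]. lra.
Qed.

Lemma converges_sub u v l m : converges u l -> converges v m ->
  converges (fun n => u n -: v n) (l -: m).
Proof.
  intros H1 H2. apply converges_add; [exact H1|].
  intros e He. destruct (H2 e He) as [N HN]. exists N. intros n Hn.
  rewrite <- oppD, norm_opp. auto.
Qed.

Lemma converges_subseq u l phi :
  increasing phi -> converges u l -> converges (fun n => u (phi n)) l.
Proof.
  intros Hp H e He. destruct (H e He) as [N HN]. exists N. intros n Hn.
  apply HN. pose proof (increasing_ge phi Hp n). lia.
Qed.

Lemma converges_rscal u l r : converges u l -> converges (fun n => rscal r (u n)) (rscal r l).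
Proof.
  intros H e He. destruct (H (e / (Rabs r + 1))) as [N HN].
  { apply Rdiv_lt_0_compat; auto. pose proof (Rabs_pos r); lra. }
  exists N. intros n Hn. unfold rscal. rewrite <- bscal_sub. fold (rscal r (u n -: l)).
  rewrite norm_rscal. specialize (HN n Hn).
  pose proof (Rabs_pos r). pose proof (bnorm_ge0 _ (u n -: l)).
  apply Rmult_lt_compat_l with (r := Rabs r + 1) in HN; [|lra].
  replace ((Rabs r + 1) * (e / (Rabs r + 1))) with e in HN by (field; lra). nra.
Qed.

Lemma converges_inv_succ v : (forall k, bnorm (v k) <= / (INR k + 1)) -> converges v bzero.
Proof.
  intros H e He. destruct (archimed_cor1 e He) as [N [HN HN0]]. exists N. intros n Hn.
  rewrite subr0. eapply Rle_lt_trans; [apply H|]. eapply Rle_lt_trans; [|exact HN].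
  apply Rinv_le_contravar. apply lt_0_INR; lia. apply le_INR in Hn. lra.
Qed.

Lemma converges_cauchy u l : converges u l -> forall e, 0 < e ->
  exists N, forall i j, (N <= i)%nat -> (N <= j)%nat -> bnorm (u i -: u j) < e.
Proof.
  intros H e He. destruct (H (e/2)) as [N HN]; [lra|]. exists N. intros i j Hi Hj.
  pose proof (norm_tri3 (u i) l (u j)). rewrite (norm_sym l) in H0.
  pose proof (HN i Hi). pose proof (HN j Hj). lra.
Qed.

Lemma converges_bounded u l : converges u l -> exists B, forall n, bnorm (u n) <= B.
Proof.
  intros H. destruct (H 1) as [N HN]; [lra|].
  assert (Hfirst : forall K, exists B, forall i, (i < K)%nat -> bnorm (u i) <= B).
  { induction K as [|K [B HB]]; [exists 0; intros; lia|].
    exists (Rmax B (bnorm (u K))). intros i Hi. destruct (Nat.eq_dec i K) as [->|].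
    - apply Rmax_r.
    - eapply Rle_trans; [apply HB; lia|apply Rmax_l]. }
  destruct (Hfirst N) as [B HB].
  exists (Rmax B (bnorm l + 1)). intros n. destruct (le_lt_dec N n).
  - specialize (HN n l0). pose proof (norm_rev (u n) l).
    eapply Rle_trans; [|apply Rmax_r]. lra.
  - eapply Rle_trans; [apply HB; auto|apply Rmax_l].
Qed.

Lemma converges_norm1_neq0 u l : converges u l -> (forall n, bnorm (u n) = 1) -> l <> bzero.
Proof.
  intros H H1 ->. destruct (H (1/2)) as [N HN]; [lra|]. specialize (HN N (le_n _)).
  rewrite subr0, H1 in HN. lra.
Qed.

Lemma separated_no_converging_subseq u phi l : increasing phi ->
  converges (fun n => u (phi n)) l ->
  (forall i j : nat, (i < j)%nat -> 1/2 <= bnorm (u j -: u i)) -> False.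
Proof.
  intros Hp Hc Hs. destruct (Hc (1/4)) as [N HN]; [lra|].
  pose proof (HN N ltac:(lia)). pose proof (HN (S N) ltac:(lia)).
  pose proof (Hs _ _ (Hp N)). pose proof (norm_tri3 (u (phi (S N))) l (u (phi N))).
  rewrite (norm_sym l) in H2. lra.
Qed.
End Convergence.

Section BoundedLinear.
Context {X Y : Banach}.

Lemma bl_add (f : X -> Y) : bounded_linear f -> forall x y, f (x +: y) = f x +: f y.
Proof. intros [H _]; exact H. Qed.
Lemma bl_scal (f : X -> Y) : bounded_linear f -> forall a x, f (bscal a x) = bscal a (f x).
Proof. intros [_ [H _]]; exact H. Qed.
Lemma bl_rscal (f : X -> Y) : bounded_linear f -> forall r x, f (rscal r x) = rscal r (f x).
Proof. intros H r x. apply bl_scal, H. Qed.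
Lemma bl_0 (f : X -> Y) : bounded_linear f -> f bzero = bzero.
Proof. intros H. rewrite <- (bscal_0 X bzero), (bl_scal f H), bscal_0. reflexivity. Qed.
Lemma bl_sub (f : X -> Y) : bounded_linear f -> forall x y, f (x -: y) = f x -: f y.
Proof. intros H x y. rewrite (bl_add f H), !bopp_scal, (bl_scal f H). reflexivity. Qed.

Lemma bl_bound (f : X -> Y) : bounded_linear f ->
  exists M, 0 < M /\ forall x, bnorm (f x) <= M * bnorm x.
Proof.
  intros [_ [_ [M HM]]]. exists (Rmax M 1). split; [pose proof (Rmax_r M 1); lra|].
  intros x. eapply Rle_trans; [apply HM|].
  apply Rmult_le_compat_r; [apply bnorm_ge0|apply Rmax_l].
Qed.

Lemma bl_converges (f : X -> Y) u l : bounded_linear f -> converges u l ->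
  converges (fun n => f (u n)) (f l).
Proof.
  intros H Hc e He. destruct (bl_bound f H) as [M [HM HMb]].
  destruct (Hc (e / M)) as [N HN]; [apply Rdiv_lt_0_compat; auto|].
  exists N. intros n Hn. rewrite <- (bl_sub f H). eapply Rle_lt_trans; [apply HMb|].
  specialize (HN n Hn). apply Rmult_lt_compat_l with (r := M) in HN; auto.
  replace (M * (e / M)) with e in HN by (field; lra). exact HN.
Qed.

Lemma bl_id : bounded_linear (fun x : X => x).
Proof. split; [|split]; auto. exists 1. intros; lra. Qed.

Lemma bl_sub_fun (f g : X -> Y) : bounded_linear f -> bounded_linear g ->
  bounded_linear (fun x => f x -: g x).
Proof.
  intros Hf Hg. split; [|split].
  - intros x y. rewrite (bl_add f Hf), (bl_add g Hg), add_sub4. reflexivity.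
  - intros a x. rewrite (bl_scal f Hf), (bl_scal g Hg), bscal_sub. reflexivity.
  - destruct (bl_bound f Hf) as [M1 [H1 HM1]]. destruct (bl_bound g Hg) as [M2 [H2 HM2]].
    exists (M1 + M2). intros x. eapply Rle_trans; [apply norm_sub_le|].
    specialize (HM1 x). specialize (HM2 x). lra.
Qed.
End BoundedLinear.

Lemma bl_comp {X Y Z : Banach} (f : X -> Y) (g : Y -> Z) : bounded_linear f -> bounded_linear g ->
  bounded_linear (fun x => g (f x)).
Proof.
  intros Hf Hg. split; [|split].
  - intros x y. rewrite (bl_add f Hf), (bl_add g Hg). reflexivity.
  - intros a x. rewrite (bl_scal f Hf), (bl_scal g Hg). reflexivity.
  - destruct (bl_bound f Hf) as [M1 [H1 HM1]]. destruct (bl_bound g Hg) as [M2 [H2 HM2]].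
    exists (M2 * M1). intros x. eapply Rle_trans; [apply HM2|].
    rewrite Rmult_assoc. apply Rmult_le_compat_l; [lra|apply HM1].
Qed.

(** Unlike [compact_op], this asks for convergent subsequences of arbitrary bounded
    sequences; for linear maps it follows from [compact_op] ([compact_op_seq_compact]). *)
Definition seq_compact {X Y : Banach} (f : X -> Y) : Prop :=
  forall (u : nat -> X) B, (forall n, bnorm (u n) <= B) ->
    exists phi, increasing phi /\ exists l, converges (fun n => f (u (phi n))) l.

Section SeqCompact.
Context {X Y Z : Banach}.

Lemma compact_op_seq_compact (f : X -> Y) :
  bounded_linear f -> compact_op f -> seq_compact f.
Proof.
  intros Hl Hc u B HB. set (B' := Rmax B 1).
  assert (HB' : 0 < B') by (pose proof (Rmax_r B 1); unfold B'; lra).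
  destruct (Hc (fun n => rscal (/ B') (u n))) as [phi [Hphi [l Hconv]]].
  { intros n. rewrite norm_rscal, Rabs_right by (apply Rle_ge, Rlt_le, Rinv_0_lt_compat; auto).
    apply Rmult_le_reg_l with B'; auto. rewrite <- Rmult_assoc, Rinv_r, Rmult_1_l, Rmult_1_r by lra.
    eapply Rle_trans; [apply HB|apply Rmax_l]. }
  exists phi. split; auto. exists (rscal B' l).
  eapply converges_ext; [|apply (converges_rscal _ _ B' Hconv)]. intros n; simpl.
  rewrite (bl_rscal f Hl), rscal_rscal, Rinv_r, rscal1 by lra. reflexivity.
Qed.

Lemma seq_compact_comp_l (f : X -> Y) (g : Y -> Z) :
  seq_compact f -> bounded_linear g -> seq_compact (fun x => g (f x)).
Proof.
  intros Hf Hg u B HB. destruct (Hf u B HB) as [phi [Hp [l Hl]]]. exists phi. split; auto.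
  exists (g l). apply (bl_converges g _ _ Hg Hl).
Qed.

Lemma seq_compact_comp_r (g : X -> Y) (f : Y -> Z) :
  bounded_linear g -> seq_compact f -> seq_compact (fun x => f (g x)).
Proof.
  intros Hg Hf u B HB. destruct (bl_bound g Hg) as [M [HM HMb]].
  apply (Hf (fun n => g (u n)) (M * B)). intros n. eapply Rle_trans; [apply HMb|].
  apply Rmult_le_compat_l; auto. lra.
Qed.

Lemma seq_compact_add (f g : X -> Y) :
  seq_compact f -> seq_compact g -> seq_compact (fun x => f x +: g x).
Proof.
  intros Hf Hg u B HB. destruct (Hf u B HB) as [phi [Hp [l Hl]]].
  destruct (Hg (fun n => u (phi n)) B (fun n => HB (phi n))) as [psi [Hq [m Hm]]].
  exists (fun n => phi (psi n)). split; [apply increasing_comp; auto|].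
  exists (l +: m). apply converges_add; auto. apply (converges_subseq _ _ _ Hq Hl).
Qed.

Lemma seq_compact_zero : seq_compact (fun _ : X => (@bzero Y)).
Proof.
  intros u B HB. exists (fun n => n). split; [intros n; lia|].
  exists bzero. apply converges_const.
Qed.
End SeqCompact.

(** * Closed subspaces and Riesz's lemma *)

Definition is_subspace {X : Banach} (M : X -> Prop) : Prop :=
  M bzero /\ (forall x y, M x -> M y -> M (x +: y)) /\ (forall a x, M x -> M (bscal a x)).
Definition is_closed {X : Banach} (M : X -> Prop) : Prop :=
  forall (u : nat -> X) l, (forall n, M (u n)) -> converges u l -> M l.

Definition closed_subspace {X : Banach} (M : X -> Prop)
  (Hs : is_subspace M) (Hc : is_closed M) : ClosedSubspace X :=
  Build_ClosedSubspace X M (proj1 Hs) (proj1 (proj2 Hs)) (proj2 (proj2 Hs)) Hc.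

Section Subspaces.
Context {X : Banach}.
Implicit Types M : X -> Prop.

Lemma subspace_add M : is_subspace M -> forall x y, M x -> M y -> M (x +: y).
Proof. intros [_ [H _]]; exact H. Qed.
Lemma subspace_scal M : is_subspace M -> forall a x, M x -> M (bscal a x).
Proof. intros [_ [_ H]]; exact H. Qed.
Lemma subspace_rscal M : is_subspace M -> forall r x, M x -> M (rscal r x).
Proof. intros H r x; apply subspace_scal, H. Qed.
Lemma subspace_sub M : is_subspace M -> forall x y, M x -> M y -> M (x -: y).
Proof.
  intros H x y Hx Hy. apply subspace_add; auto. rewrite bopp_scal. apply subspace_scal; auto.
Qed.

Lemma is_closed_ext M M' : (forall z, M z <-> M' z) -> is_closed M -> is_closed M'.
Proof. intros E H u l Hu Hc. apply E. apply (H u); auto. intros n; apply E, Hu. Qed.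

Lemma dist_closed_pos M w : is_closed M -> ~ M w ->
  exists d, 0 < d /\ forall m, M m -> d <= bnorm (w -: m).
Proof.
  intros Hc Hw. apply NNPP. intros H.
  assert (Hnear : forall k : nat, exists m, M m /\ bnorm (w -: m) < / (INR k + 1)).
  { intros k. apply NNPP. intros H2. apply H. exists (/ (INR k + 1)). split.
    - apply Rinv_0_lt_compat. pose proof (pos_INR k); lra.
    - intros m Hm. apply Rnot_lt_le. intros H3. apply H2. exists m; auto. }
  apply choice in Hnear. destruct Hnear as [f Hf]. apply Hw. apply (Hc f); [intros n; apply Hf|].
  intros e He.
  destruct (converges_inv_succ (fun k => w -: f k) (fun k => Rlt_le _ _ (proj2 (Hf k))) e He)
    as [N HN].
  exists N. intros n Hn. specialize (HN n Hn). rewrite subr0, norm_sym in HN. exact HN.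
Qed.

(** Riesz's lemma; [m0] is a [2]-approximate nearest point, found via the infimum of the
    distances. *)
Lemma riesz_lemma M w : is_subspace M -> is_closed M -> ~ M w ->
  exists m0, M m0 /\ 0 < bnorm (w -: m0) /\
    forall m, M m -> 1/2 <= bnorm (rscal (/ bnorm (w -: m0)) (w -: m0) -: m).
Proof.
  intros Hs Hc Hw. destruct (dist_closed_pos M w Hc Hw) as [d0 [Hd0 Hd0b]].
  set (E := fun t => forall m, M m -> t <= bnorm (w -: m)).
  assert (Hb : bound E). { exists (bnorm (w -: bzero)). intros t Ht. apply Ht, Hs. }
  destruct (completeness E Hb (ex_intro _ d0 Hd0b)) as [d [Hub Hlub]].
  assert (Hd : d0 <= d) by (apply Hub; exact Hd0b).
  assert (HE : E d) by (intros m Hm; apply Hlub; intros t Ht; apply Ht, Hm).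
  assert (Hm0 : exists m0, M m0 /\ bnorm (w -: m0) < 2 * d).
  { apply NNPP. intros H. assert (H2d : E (2 * d)).
    { intros m Hm. apply Rnot_lt_le. intros H2. apply H. exists m; auto. }
    specialize (Hub _ H2d). lra. }
  destruct Hm0 as [m0 [Hm0 Hm0d]].
  assert (Hn0 : d <= bnorm (w -: m0)) by (apply HE, Hm0).
  set (n0 := bnorm (w -: m0)) in *.
  exists m0. split; [exact Hm0|]. split; [fold n0; lra|]. intros m Hm. fold n0.
  replace (rscal (/ n0) (w -: m0) -: m) with (rscal (/ n0) (w -: (m0 +: rscal n0 m))).
  - rewrite norm_rscal, Rabs_right by (apply Rle_ge, Rlt_le, Rinv_0_lt_compat; lra).
    assert (d <= bnorm (w -: (m0 +: rscal n0 m))).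
    { apply HE. apply subspace_add; auto. apply subspace_rscal; auto. }
    apply Rmult_le_reg_l with n0; [lra|].
    rewrite <- Rmult_assoc, Rinv_r, Rmult_1_l by lra. nra.
  - rewrite sub_add. unfold rscal at 1. rewrite bscal_sub.
    fold (rscal (/ n0) (w -: m0)) (rscal (/ n0) (rscal n0 m)).
    rewrite rscal_rscal, Rinv_l, rscal1 by lra. reflexivity.
Qed.
End Subspaces.

Definition kernel {X Y : Banach} (f : X -> Y) (x : X) : Prop := f x = bzero.
Definition range {X Y : Banach} (f : X -> Y) (y : Y) : Prop := exists x, y = f x.

Section KernelRange.
Context {X Y : Banach} (f : X -> Y) (Hf : bounded_linear f).

Lemma kernel_subspace : is_subspace (kernel f).
Proof.
  unfold kernel. split; [|split].
  - apply bl_0, Hf.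
  - intros x y Hx Hy. rewrite (bl_add f Hf), Hx, Hy, badd_0. reflexivity.
  - intros a x Hx. rewrite (bl_scal f Hf), Hx, bscal0r. reflexivity.
Qed.

Lemma kernel_closed : is_closed (kernel f).
Proof.
  unfold kernel. intros u l Hu Hc. apply (converges_unique (fun n => f (u n))); [apply bl_converges; auto|].
  eapply converges_ext; [|apply converges_const]. intros n; simpl; auto.
Qed.

Lemma range_subspace : is_subspace (range f).
Proof.
  unfold range. split; [|split].
  - exists bzero. symmetry; apply bl_0, Hf.
  - intros x y [a Ha] [b Hb]. exists (a +: b). rewrite (bl_add f Hf); subst; auto.
  - intros c x [a Ha]. exists (bscal c a). rewrite (bl_scal f Hf); subst; auto.
Qed.
End KernelRange.

(** * Riesz theory of [I - K] with [K] compact *)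

Section IdentityMinusCompact.
Variables (Y : Banach) (A K : Y -> Y).
Hypotheses (HA : bounded_linear A) (HK : seq_compact K) (HAK : forall y, A y = y -: K y).

Lemma converging_image_subseq (z : nat -> Y) Bd y : (forall n, bnorm (z n) <= Bd) ->
  converges (fun n => A (z n)) y ->
  exists phi w, increasing phi /\ converges (fun n => z (phi n)) w /\ A w = y.
Proof.
  intros Hb Hc. destruct (HK z Bd Hb) as [phi [Hp [l Hl]]].
  assert (Hw : converges (fun n => z (phi n)) (y +: l)).
  { eapply converges_ext; [|apply (converges_add _ _ _ _ (converges_subseq _ _ _ Hp Hc) Hl)].
    intros n; simpl. rewrite HAK, subrK. reflexivity. }
  exists phi, (y +: l). split; [auto|]. split; [auto|].
  apply (converges_unique (fun n => A (z (phi n)))); [apply bl_converges; auto|].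
  apply (converges_subseq _ _ _ Hp Hc).
Qed.

Lemma kernel_distance_bound : exists c, 0 < c /\
  forall x, exists n, A n = bzero /\ bnorm (x -: n) <= c * bnorm (A x).
Proof.
  apply NNPP. intros H.
  assert (Hbad : forall k : nat, exists z, bnorm z = 1 /\ bnorm (A z) <= / (INR k + 1) /\
     forall n, A n = bzero -> 1/2 <= bnorm (z -: n)).
  { intros k. assert (Hk0 : 0 < INR k + 1) by (pose proof (pos_INR k); lra).
    assert (Hx : exists x, forall n, A n = bzero -> (INR k + 1) * bnorm (A x) < bnorm (x -: n)).
    { apply NNPP. intros H2. apply H. exists (INR k + 1). split; [lra|].
      intros x. apply NNPP. intros H3. apply H2. exists x. intros n Hn. apply Rnot_le_lt.
      intros H4. apply H3. exists n. auto. }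
    destruct Hx as [x Hx].
    assert (Hnx : ~ A x = bzero).
    { intros E. specialize (Hx x E). rewrite E, norm0, subrr, norm0 in Hx. lra. }
    destruct (riesz_lemma _ x (kernel_subspace A HA) (kernel_closed A HA) Hnx)
      as [m0 [Hm0 [Hpos Hsep]]].
    exists (rscal (/ bnorm (x -: m0)) (x -: m0)). split; [apply norm_normalize; auto|].
    split; [|exact Hsep].
    rewrite (bl_rscal A HA), (bl_sub A HA), Hm0, subr0, norm_rscal, Rabs_right
      by (apply Rle_ge, Rlt_le, Rinv_0_lt_compat; lra).
    specialize (Hx m0 Hm0).
    apply Rmult_le_reg_l with (bnorm (x -: m0)); [lra|].
    rewrite <- Rmult_assoc, Rinv_r, Rmult_1_l by lra.
    apply Rmult_le_reg_l with (INR k + 1); [lra|].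
    replace ((INR k + 1) * (bnorm (x -: m0) * / (INR k + 1))) with (bnorm (x -: m0))
      by (field; lra). lra. }
  apply choice in Hbad. destruct Hbad as [z Hz].
  destruct (converging_image_subseq z 1 bzero) as [phi [w [Hp [Hw HAw]]]].
  { intros n. rewrite (proj1 (Hz n)). lra. }
  { apply converges_inv_succ. intros k. apply Hz. }
  destruct (Hw (1/2)) as [N HN]; [lra|]. specialize (HN N (le_n _)).
  pose proof (proj2 (proj2 (Hz (phi N))) w HAw). lra.
Qed.

Lemma range_closed : is_closed (range A).
Proof.
  intros u l Hu Hc. destruct kernel_distance_bound as [c [Hc0 Hcb]].
  assert (Hpre : forall n, exists x, u n = A x /\ bnorm x <= c * bnorm (u n)).
  { intros n. destruct (Hu n) as [x Hx]. destruct (Hcb x) as [m [Hm Hxm]].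
    exists (x -: m). rewrite (bl_sub A HA), Hm, subr0. split; auto. rewrite Hx; auto. }
  apply choice in Hpre. destruct Hpre as [x Hx].
  destruct (converges_bounded u l Hc) as [Bd HBd].
  destruct (converging_image_subseq x (c * Bd) l) as [phi [w [Hp [Hw HAw]]]].
  - intros n. eapply Rle_trans; [apply Hx|]. apply Rmult_le_compat_l; [lra|apply HBd].
  - eapply converges_ext; [|exact Hc]. intros n. apply Hx.
  - exists w. auto.
Qed.
End IdentityMinusCompact.

Section RieszTheory.
Variables (Y : Banach) (A K : Y -> Y).
Hypotheses (HA : bounded_linear A) (HK : seq_compact K) (HAK : forall y, A y = y -: K y).

Definition Apow n (y : Y) := Nat.iter n A y.

Lemma Apow_bl n : bounded_linear (Apow n).
Proof. induction n; [apply bl_id|]. exact (bl_comp (Apow n) A IHn HA). Qed.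

Lemma Apow_add p q y : Apow (p + q) y = Apow p (Apow q y).
Proof. apply Nat.iter_add. Qed.
Lemma Apow_S n y : Apow (S n) y = Apow n (A y).
Proof. apply Nat.iter_succ_r. Qed.

Lemma Apow_compact_perturbation n :
  exists Kn, seq_compact Kn /\ forall y, Apow n y = y -: Kn y.
Proof.
  induction n as [|n [Kn [HKn HAn]]].
  - exists (fun _ => bzero). split; [apply seq_compact_zero|]. intros y. symmetry; apply subr0.
  - exists (fun y => Kn y +: K (Apow n y)). split.
    + apply seq_compact_add; auto. apply seq_compact_comp_r; auto. apply Apow_bl.
    + intros y. change (A (Apow n y) = y -: (Kn y +: K (Apow n y))).
      rewrite HAK, HAn, sub_add. reflexivity.
Qed.

Lemma Apow_range_closed n : is_closed (range (Apow n)).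
Proof.
  destruct (Apow_compact_perturbation n) as [Kn [HKn HAn]].
  exact (range_closed Y (Apow n) Kn (Apow_bl n) HKn HAn).
Qed.

Lemma Apow_kernel_mono j k y : (j <= k)%nat -> Apow j y = bzero -> Apow k y = bzero.
Proof.
  intros Hjk H. replace k with ((k - j) + j)%nat by lia. rewrite Apow_add, H.
  apply bl_0, Apow_bl.
Qed.
Lemma Apow_range_mono j k y : (j <= k)%nat -> range (Apow k) y -> range (Apow j) y.
Proof.
  intros Hjk [x Hx]. exists (Apow (k - j) x). rewrite Hx, <- Apow_add. f_equal. lia.
Qed.

(** [K x - K y = x - (A x + K y)] with [A x + K y] in a smaller kernel or range; this is how
    the separated sequences below contradict compactness. *)
Lemma K_sub (x y : Y) : K x -: K y = x -: (A x +: K y).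
Proof. rewrite sub_add, HAK, sub_sub. reflexivity. Qed.

Lemma K_eq y : K y = y -: A y.
Proof. rewrite HAK, sub_sub. reflexivity. Qed.

Lemma ascent_finite : exists p, forall y, Apow (S p) y = bzero -> Apow p y = bzero.
Proof.
  apply NNPP. intros H.
  assert (Hsep : forall p, exists u, bnorm u = 1 /\ Apow (S p) u = bzero /\
      forall m, Apow p m = bzero -> 1/2 <= bnorm (u -: m)).
  { intros p. assert (Hy : exists y, Apow (S p) y = bzero /\ Apow p y <> bzero).
    { apply NNPP. intros H2. apply H. exists p. intros y Hy. apply NNPP. intros H3.
      apply H2. eauto. }
    destruct Hy as [y [Hy1 Hy2]].
    destruct (riesz_lemma _ y (kernel_subspace _ (Apow_bl p)) (kernel_closed _ (Apow_bl p)) Hy2)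
      as [m0 [Hm0 [Hpos Hd]]].
    exists (rscal (/ bnorm (y -: m0)) (y -: m0)). split; [apply norm_normalize; auto|].
    split; [|exact Hd].
    pose proof (kernel_subspace _ (Apow_bl (S p))) as Hker.
    apply (subspace_rscal _ Hker), (subspace_sub _ Hker); [exact Hy1|].
    apply (Apow_kernel_mono p); auto. }
  apply choice in Hsep. destruct Hsep as [u Hu].
  destruct (HK u 1) as [phi [Hp [l Hl]]]; [intros n; rewrite (proj1 (Hu n)); lra|].
  apply (separated_no_converging_subseq (fun n => K (u n)) phi l Hp Hl).
  intros m n Hmn. rewrite K_sub. apply Hu.
  pose proof (bl_add _ (Apow_bl n)) as Hadd.
  rewrite Hadd, <- Apow_S, (proj1 (proj2 (Hu n))), badd_0.
  rewrite K_eq, (bl_sub _ (Apow_bl n)), <- Apow_S.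
  rewrite (Apow_kernel_mono (S m) n), (Apow_kernel_mono (S m) (S n)); try apply Hu; try lia.
  apply subrr.
Qed.

Lemma descent_finite : exists p, forall y, range (Apow p) y -> range (Apow (S p)) y.
Proof.
  apply NNPP. intros H.
  assert (Hsep : forall p, exists u, bnorm u = 1 /\ range (Apow p) u /\
      forall m, range (Apow (S p)) m -> 1/2 <= bnorm (u -: m)).
  { intros p. assert (Hy : exists y, range (Apow p) y /\ ~ range (Apow (S p)) y).
    { apply NNPP. intros H2. apply H. exists p. intros y Hy. apply NNPP. intros H3.
      apply H2. eauto. }
    destruct Hy as [y [Hy1 Hy2]].
    destruct (riesz_lemma _ y (range_subspace _ (Apow_bl (S p))) (Apow_range_closed (S p)) Hy2)
      as [m0 [Hm0 [Hpos Hd]]].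
    exists (rscal (/ bnorm (y -: m0)) (y -: m0)). split; [apply norm_normalize; auto|].
    split; [|exact Hd].
    pose proof (range_subspace _ (Apow_bl p)) as Hran.
    apply (subspace_rscal _ Hran), (subspace_sub _ Hran); [exact Hy1|].
    apply (Apow_range_mono p (S p)); auto. }
  apply choice in Hsep. destruct Hsep as [u Hu].
  destruct (HK u 1) as [phi [Hp [l Hl]]]; [intros n; rewrite (proj1 (Hu n)); lra|].
  apply (separated_no_converging_subseq (fun n => K (u n)) phi l Hp Hl).
  intros m n Hmn. simpl. rewrite norm_sym, K_sub. apply Hu.
  pose proof (range_subspace _ (Apow_bl (S m))) as Hran.
  apply (subspace_add _ Hran).
  - destruct (proj1 (proj2 (Hu m))) as [x Hx]. exists x. rewrite Hx. reflexivity.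
  - rewrite K_eq. apply (subspace_sub _ Hran).
    + apply (Apow_range_mono (S m) n); [lia|]. apply Hu.
    + apply (Apow_range_mono (S m) (S n)); [lia|]. destruct (proj1 (proj2 (Hu n))) as [x Hx].
      exists x. rewrite Hx. reflexivity.
Qed.

(** Any [q] beyond both the ascent and the descent of [A] works. *)
Lemma riesz_index : exists q, (1 <= q)%nat /\
   (forall x, Apow q (Apow q x) = bzero -> Apow q x = bzero) /\
   (forall y, exists x, Apow q y = Apow q (Apow q x)).
Proof.
  destruct ascent_finite as [pa Ha]. destruct descent_finite as [pd Hd].
  set (q := S (pa + pd)). exists q. split; [unfold q; lia|]. split.
  - intros x. rewrite <- Apow_add.
    enough (Hk : forall k, Apow (k + q) x = bzero -> Apow q x = bzero) by apply Hk.
    induction k as [|k IHk]; [auto|]. intros Hx. apply IHk.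
    replace (k + q)%nat with (pa + (k + q - pa))%nat by (unfold q; lia).
    rewrite Apow_add. apply Ha. rewrite <- Apow_add.
    replace (S pa + (k + q - pa))%nat with (S k + q)%nat by (unfold q; lia). exact Hx.
  - intros y.
    enough (Hk : forall k, exists x, Apow q y = Apow (k + q) x).
    { destruct (Hk q) as [x Hx]. exists x. rewrite Hx, Apow_add. reflexivity. }
    induction k as [|k [x Hx]]; [exists y; reflexivity|].
    replace (k + q)%nat with ((k + q - pd) + pd)%nat in Hx by (unfold q; lia).
    rewrite Apow_add in Hx. destruct (Hd (Apow pd x) (ex_intro _ x eq_refl)) as [x' Hx'].
    exists x'. rewrite Hx, Hx', <- Apow_add. f_equal. unfold q; lia.
Qed.
End RieszTheory.


(** * Finite-dimensional spaces *)

Lemma Re_le_Cnorm (z : Defs.C) : Rabs (Re z) <= Cnorm z.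
Proof.
  unfold Cnorm. rewrite <- (pow2_abs (Re z)), <- (pow2_abs (Im z)). apply le_l2, Rabs_pos.
Qed.
Lemma Im_le_Cnorm (z : Defs.C) : Rabs (Im z) <= Cnorm z.
Proof.
  unfold Cnorm. rewrite <- (pow2_abs (Re z)), <- (pow2_abs (Im z)), Rplus_comm.
  apply le_l2, Rabs_pos.
Qed.
Lemma Cnorm_le_Re_Im (z : Defs.C) : Cnorm z <= Rabs (Re z) + Rabs (Im z).
Proof.
  unfold Cnorm. rewrite <- (pow2_abs (Re z)), <- (pow2_abs (Im z)).
  apply l2_le_sum; apply Rabs_pos.
Qed.

Definition Cinv (z : Defs.C) : Defs.C :=
  mkC (Re z / (Re z ^ 2 + Im z ^ 2)) (- Im z / (Re z ^ 2 + Im z ^ 2)).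

Lemma Cmul_inv (z : Defs.C) : z <> Defs.C0 -> Cmul z (Cinv z) = Defs.C1.
Proof.
  intros Hz. assert (Hn : Re z ^ 2 + Im z ^ 2 <> 0).
  { intros H. apply Hz. destruct z as [x y]. simpl in H. unfold Defs.C0. f_equal; nra. }
  unfold Cmul, Cinv, Defs.C1. cbn [Re Im]. f_equal; field; auto.
Qed.

Lemma Cnorm_C0 : Cnorm Defs.C0 = 0.
Proof.
  unfold Cnorm, Defs.C0; cbn [Re Im]. replace (0 ^ 2 + 0 ^ 2) with 0 by ring. apply sqrt_0.
Qed.

Lemma scal_converges_of_cauchy (lam : nat -> Defs.C) :
  (forall e, 0 < e -> exists N, forall j k, (N <= j)%nat -> (N <= k)%nat ->
     Cnorm (Cadd (lam j) (Copp (lam k))) < e) ->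
  exists l : Defs.C, forall (X : Banach) (v : X), converges (fun n => bscal (lam n) v) (bscal l v).
Proof.
  intros Hcau.
  assert (HRe : Cauchy_crit (fun n => Re (lam n))).
  { intros e He. destruct (Hcau e He) as [N HN]. exists N. intros j k Hj Hk. unfold R_dist.
    eapply Rle_lt_trans; [|apply (HN j k)]; auto. apply (Re_le_Cnorm (Cadd _ (Copp _))). }
  assert (HIm : Cauchy_crit (fun n => Im (lam n))).
  { intros e He. destruct (Hcau e He) as [N HN]. exists N. intros j k Hj Hk. unfold R_dist.
    eapply Rle_lt_trans; [|apply (HN j k)]; auto. apply (Im_le_Cnorm (Cadd _ (Copp _))). }
  destruct (R_complete _ HRe) as [lr Hlr]. destruct (R_complete _ HIm) as [li Hli].
  exists (mkC lr li). intros X v e He. set (e' := e / (2 * (bnorm v + 1))).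
  pose proof (bnorm_ge0 _ v).
  assert (He' : 0 < e') by (unfold e'; apply Rdiv_lt_0_compat; lra).
  destruct (Hlr e' He') as [N1 HN1]. destruct (Hli e' He') as [N2 HN2].
  exists (N1 + N2)%nat. intros n Hn.
  specialize (HN1 n ltac:(lia)). specialize (HN2 n ltac:(lia)). unfold R_dist in *.
  rewrite <- bscal_subl, bnorm_scal.
  set (z := Cadd (lam n) (Copp (mkC lr li))).
  pose proof (Cnorm_le_Re_Im z) as Hz. pose proof (Cnorm_ge0 z).
  unfold z in Hz at 2 3; cbn [Re Im Cadd Copp] in Hz.
  assert (Cnorm z <= 2 * e') by (unfold Rminus in *; lra).
  assert (2 * e' * (bnorm v + 1) = e) by (unfold e'; field; lra). nra.
Qed.

Section FiniteDimensional.
Context {X : Banach}.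
Implicit Types M : X -> Prop.

Lemma dist_scal_ge M v d : is_subspace M -> (forall m, M m -> d <= bnorm (v -: m)) ->
  0 <= d -> forall m (l : Defs.C), M m -> Cnorm l * d <= bnorm (m +: bscal l v).
Proof.
  intros Hs Hd Hd0 m l Hm. destruct (classic (l = Defs.C0)) as [->|E].
  - rewrite Cnorm_C0, Rmult_0_l. apply bnorm_ge0.
  - replace (m +: bscal l v) with (bscal l (v -: (-: bscal (Cinv l) m))).
    + rewrite bnorm_scal. apply Rmult_le_compat_l; [apply Cnorm_ge0|]. apply Hd.
      rewrite bopp_scal. apply subspace_scal, subspace_scal; auto.
    + rewrite oppK, bscal_addr, bscal_assoc, Cmul_inv, bscal_1 by auto. apply badd_comm.
Qed.

(** The coefficient of [v] is controlled by the distance from [v] to [M]. *)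
Lemma closed_add_line M v : is_subspace M -> is_closed M -> ~ M v ->
  is_closed (fun z => exists m l, M m /\ z = m +: bscal l v).
Proof.
  intros Hs Hc Hv u y Hu Hconv.
  destruct (dist_closed_pos M v Hc Hv) as [d [Hd Hdb]].
  assert (Hdec : forall n, exists p : X * Defs.C, M (fst p) /\ u n = fst p +: bscal (snd p) v).
  { intros n. destruct (Hu n) as [m [l [Hm E]]]. exists (m, l). auto. }
  apply choice in Hdec. destruct Hdec as [f Hf].
  set (lam := fun n => snd (f n)).
  assert (Hdiff : forall j k, Cnorm (Cadd (lam j) (Copp (lam k))) * d <= bnorm (u j -: u k)).
  { intros j k. rewrite (proj2 (Hf j)), (proj2 (Hf k)), add_sub4, <- bscal_subl.
    apply dist_scal_ge with (M := M); auto; [lra|]. apply subspace_sub; auto; apply Hf. }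
  destruct (scal_converges_of_cauchy lam) as [l Hl].
  { intros e He. destruct (converges_cauchy u y Hconv (e * d)) as [N HN]; [nra|].
    exists N. intros j k Hj Hk. specialize (HN j k Hj Hk). specialize (Hdiff j k).
    apply Rmult_lt_reg_r with d; auto. lra. }
  exists (y -: bscal l v), l. split; [|rewrite subrK; reflexivity].
  apply (Hc (fun n => fst (f n))); [intros n; apply Hf|].
  eapply converges_ext; [|apply (converges_sub _ _ _ _ Hconv (Hl X v))]. intros n. simpl.
  rewrite (proj2 (Hf n)). apply addrK.
Qed.

Definition span n (v : nat -> X) (z : X) : Prop := exists c, z = lincomb n c v.

Lemma lincomb_ext n c c' (v : nat -> X) : (forall i, (i < n)%nat -> c i = c' i) ->
  lincomb n c v = lincomb n c' v.
Proof. induction n; intros H; simpl; auto. rewrite IHn, H; auto. Qed.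

Lemma lincomb_zero n (v : nat -> X) : lincomb n (fun _ => Defs.C0) v = bzero.
Proof. induction n; simpl; auto. rewrite IHn, bscal_0, badd_0. reflexivity. Qed.

Lemma lincomb_delta n m (v : nat -> X) : (m < n)%nat ->
  lincomb n (fun i => if Nat.eqb i m then Defs.C1 else Defs.C0) v = v m.
Proof.
  induction n; intros H; [lia|]. simpl. destruct (Nat.eqb_spec n m).
  - subst. rewrite bscal_1, (lincomb_ext _ _ (fun _ => Defs.C0)), lincomb_zero, badd_0; auto.
    intros i Hi. destruct (Nat.eqb_spec i m); auto; lia.
  - rewrite IHn by lia. rewrite bscal_0, addr0. reflexivity.
Qed.

Lemma span_subspace n v : is_subspace (span n v).
Proof.
  split; [|split].
  - exists (fun _ => Defs.C0). symmetry. apply lincomb_zero.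
  - intros x y [c1 ->] [c2 ->]. exists (fun i => Cadd (c1 i) (c2 i)).
    induction n; simpl; [rewrite badd_0; auto|].
    rewrite <- IHn, bscal_addl, addACA. reflexivity.
  - intros a x [c ->]. exists (fun i => Cmul a (c i)).
    induction n; simpl; [apply bscal0r|]. rewrite bscal_addr, IHn, bscal_assoc. reflexivity.
Qed.

Lemma span_S n v z : span (S n) v z <-> exists m l, span n v m /\ z = m +: bscal l (v n).
Proof.
  split.
  - intros [c ->]. exists (lincomb n c v), (c n). split; auto. exists c; auto.
  - intros [m [l [[c ->] ->]]]. exists (fun i => if Nat.eqb i n then l else c i).
    simpl. rewrite Nat.eqb_refl. f_equal. apply lincomb_ext. intros i Hi.
    destruct (Nat.eqb_spec i n); auto; lia.
Qed.

Lemma span_closed n v : is_closed (span n v).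
Proof.
  induction n.
  - intros u l Hu Hc. exists (fun _ => Defs.C0). simpl.
    apply (converges_unique u); auto. eapply converges_ext; [|apply converges_const].
    intros k. destruct (Hu k) as [c Hk]. auto.
  - destruct (classic (span n v (v n))) as [Hin|Hout].
    + apply (is_closed_ext (span n v)); auto. intros z. rewrite span_S. split.
      * intros Hz. exists z, Defs.C0. split; auto. rewrite bscal_0, addr0. reflexivity.
      * intros [m [l [Hm ->]]]. apply (subspace_add _ (span_subspace n v)); auto.
        apply (subspace_scal _ (span_subspace n v)); auto.
    + apply (is_closed_ext (fun z => exists m l, span n v m /\ z = m +: bscal l (v n))).
      * intros z; rewrite span_S; tauto.
      * apply closed_add_line; auto. apply span_subspace.
Qed.
End FiniteDimensional.

(** [greedy_prefix g n] lists the first [n] terms of the sequence defined by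
    [u i := g (i, greedy_prefix g i)], padded with [bzero]. *)
Fixpoint greedy_prefix {Z : Banach} (g : nat * (nat -> Z) -> Z) (n : nat) : nat -> Z :=
  match n with
  | O => fun _ => bzero
  | S n' => fun i => if Nat.eqb i n' then g (n', greedy_prefix g n') else greedy_prefix g n' i
  end.

Lemma greedy_prefix_eq {Z : Banach} (g : nat * (nat -> Z) -> Z) n i : (i < n)%nat ->
  greedy_prefix g n i = g (i, greedy_prefix g i).
Proof.
  induction n; intros H; [lia|]. simpl. destruct (Nat.eqb_spec i n); [subst; auto|].
  apply IHn. lia.
Qed.

(** Riesz's theorem. Otherwise Riesz's lemma, applied to the span of the vectors already
    chosen, yields a [1/2]-separated sequence of unit vectors. *)
Lemma finite_dimensional_of_compact_id (Z : Banach) :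
  compact_op (fun z : Z => z) -> finite_dimensional Z.
Proof.
  intros Hc. apply NNPP. intros H.
  assert (Hnext : forall p : nat * (nat -> Z), exists w, bnorm w = 1 /\
      forall m, span (fst p) (snd p) m -> 1/2 <= bnorm (w -: m)).
  { intros [n v]. simpl. assert (Hz : exists z, ~ span n v z).
    { apply NNPP. intros H2. apply H. exists n, v. intros z. apply NNPP. intros H3. apply H2.
      exists z. intros [c Hc']. apply H3. exists c; auto. }
    destruct Hz as [z Hz].
    destruct (riesz_lemma (span n v) z (span_subspace n v) (span_closed n v) Hz)
      as [m0 [_ [Hpos Hd]]].
    exists (rscal (/ bnorm (z -: m0)) (z -: m0)). split; [apply norm_normalize|]; auto. }
  apply choice in Hnext. destruct Hnext as [g Hg].
  set (u := fun n => g (n, greedy_prefix g n)).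
  destruct (Hc u) as [phi [Hp [l Hl]]]; [intros n; unfold u; rewrite (proj1 (Hg _)); lra|].
  apply (separated_no_converging_subseq u phi l Hp Hl). intros m n Hmn.
  unfold u at 1. apply (proj2 (Hg (n, greedy_prefix g n))).
  simpl. exists (fun i => if Nat.eqb i m then Defs.C1 else Defs.C0).
  rewrite lincomb_delta, greedy_prefix_eq; auto.
Qed.

Definition kernel_cs {X Y : Banach} (f : X -> Y) (Hf : bounded_linear f) : ClosedSubspace X :=
  closed_subspace _ (kernel_subspace f Hf) (kernel_closed f Hf).

Lemma kernel_finite_dimensional (Y : Banach) (B K : Y -> Y) (HB : bounded_linear B) :
  seq_compact K -> (forall y, B y = y -: K y) ->
  finite_dimensional (subBanach Y (kernel_cs B HB)).
Proof.
  intros HK HBK. apply finite_dimensional_of_compact_id. intros u Hu.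
  set (v := fun n => proj1_sig (u n)).
  assert (Hv : forall n, B (v n) = bzero) by (intros n; exact (proj2_sig (u n))).
  assert (HvK : forall n, K (v n) = v n).
  { intros n. symmetry. apply subr_eq0. rewrite <- HBK. apply Hv. }
  destruct (HK v 1) as [phi [Hphi [l Hl]]]; [intros n; apply (Hu n)|].
  assert (Hl' : converges (fun n => v (phi n)) l).
  { eapply converges_ext; [|exact Hl]. intros n. apply HvK. }
  assert (HlN : B l = bzero)
    by (apply (kernel_closed B HB (fun n => v (phi n))); [intros n; apply Hv|exact Hl']).
  exists phi. split; [exact Hphi|]. exists (exist _ l HlN : subBanach Y (kernel_cs B HB)).
  exact Hl'.
Qed.

(** * Splitting [Y] *)

Section RangeProjection.
Variables (Y : Banach) (B K : Y -> Y).
Hypotheses (HB : bounded_linear B) (HK : seq_compact K) (HBK : forall y, B y = y -: K y).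
Hypothesis Hker : forall x, B (B x) = bzero -> B x = bzero.
Hypothesis Hran : forall y, exists x, B y = B (B x).

Lemma range_bounded_below : exists c, 0 < c /\ forall x, bnorm (B x) <= c * bnorm (B (B x)).
Proof.
  apply NNPP. intros H.
  assert (Hbad : forall k : nat, exists z, bnorm z = 1 /\ range B z /\
      bnorm (B z) <= / (INR k + 1)).
  { intros k. assert (Hk0 : 0 < INR k + 1) by (pose proof (pos_INR k); lra).
    assert (Hx : exists x, (INR k + 1) * bnorm (B (B x)) < bnorm (B x)).
    { apply NNPP. intros H2. apply H. exists (INR k + 1). split; [lra|].
      intros x. apply Rnot_lt_le. intros H3. apply H2. eauto. }
    destruct Hx as [x Hx]. pose proof (bnorm_ge0 _ (B (B x))).
    assert (Hr : 0 < bnorm (B x)) by nra.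
    exists (rscal (/ bnorm (B x)) (B x)). split; [apply norm_normalize; auto|].
    split; [exists (rscal (/ bnorm (B x)) x); rewrite (bl_rscal B HB); reflexivity|].
    rewrite (bl_rscal B HB), norm_rscal, Rabs_right
      by (apply Rle_ge, Rlt_le, Rinv_0_lt_compat; auto).
    apply Rmult_le_reg_l with (bnorm (B x)); auto.
    rewrite <- Rmult_assoc, Rinv_r, Rmult_1_l by lra.
    apply Rmult_le_reg_l with (INR k + 1); auto.
    replace ((INR k + 1) * (bnorm (B x) * / (INR k + 1))) with (bnorm (B x)) by (field; lra).
    lra. }
  apply choice in Hbad. destruct Hbad as [z Hz].
  destruct (converging_image_subseq Y B K HB HK HBK z 1 bzero) as [phi [w [Hp [Hw HBw]]]].
  { intros n. rewrite (proj1 (Hz n)). lra. }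
  { apply converges_inv_succ. intros k. apply Hz. }
  assert (HwR : range B w).
  { apply (range_closed Y B K HB HK HBK (fun n => z (phi n))); auto. intros n. apply Hz. }
  destruct HwR as [x ->]. apply (converges_norm1_neq0 _ _ Hw); [intros n; apply Hz|].
  apply Hker, HBw.
Qed.

Lemma range_inj r r' : range B r -> range B r' -> B r = B r' -> r = r'.
Proof.
  intros Hr Hr' E. apply subr_eq0.
  destruct (subspace_sub _ (range_subspace B HB) r r' Hr Hr') as [x Hx].
  rewrite Hx. apply Hker. rewrite <- Hx, (bl_sub B HB), E. apply subrr.
Qed.

Lemma range_projection : exists p, bounded_linear p /\
  forall y, range B (p y) /\ B (p y) = B y.
Proof.
  assert (Hp : forall y, exists r, range B r /\ B r = B y).
  { intros y. destruct (Hran y) as [x Hx]. exists (B x). split; [exists x|]; auto. }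
  apply choice in Hp. destruct Hp as [p Hp]. exists p. split; [|exact Hp].
  pose proof (range_subspace B HB) as Hs.
  split; [|split].
  - intros x y. apply range_inj; [apply Hp|apply (subspace_add _ Hs); apply Hp|].
    rewrite (proj2 (Hp _)), !(bl_add B HB), !(proj2 (Hp _)). reflexivity.
  - intros s x. apply range_inj; [apply Hp|apply (subspace_scal _ Hs); apply Hp|].
    rewrite (proj2 (Hp _)), !(bl_scal B HB), (proj2 (Hp _)). reflexivity.
  - destruct range_bounded_below as [c [Hc Hcb]]. destruct (bl_bound B HB) as [MB [HMB HMBb]].
    exists (c * MB). intros y. destruct (proj1 (Hp y)) as [x Hx]. rewrite Hx.
    eapply Rle_trans; [apply Hcb|]. rewrite <- Hx, (proj2 (Hp y)), Rmult_assoc.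
    apply Rmult_le_compat_l; [lra|apply HMBb].
Qed.
End RangeProjection.

Section DirectSumMaps.
Context {U V W : Banach}.

Lemma bl_fst : bounded_linear (fun p : dsum V W => fst p).
Proof.
  split; [|split]; auto. exists 1. intros [x y]. simpl. unfold dnorm; simpl.
  rewrite Rmult_1_l. apply (le_l2 (bnorm x) (bnorm y)), bnorm_ge0.
Qed.
Lemma bl_snd : bounded_linear (fun p : dsum V W => snd p).
Proof.
  split; [|split]; auto. exists 1. intros [x y]. simpl. unfold dnorm; simpl.
  rewrite Rmult_1_l, Rplus_comm. apply (le_l2 (bnorm y) (bnorm x)), bnorm_ge0.
Qed.
Lemma bl_inl : bounded_linear (fun x : V => ((x, bzero) : dsum V W)).
Proof.
  split; [|split].
  - intros x y. simpl. rewrite badd_0. reflexivity.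
  - intros a x. simpl. rewrite bscal0r. reflexivity.
  - exists 1. intros x. simpl. unfold dnorm; simpl. rewrite norm0.
    eapply Rle_trans; [apply l2_le_sum; [apply bnorm_ge0|lra]|lra].
Qed.
Lemma bl_inr : bounded_linear (fun x : W => ((bzero, x) : dsum V W)).
Proof.
  split; [|split].
  - intros x y. simpl. rewrite badd_0. reflexivity.
  - intros a x. simpl. rewrite bscal0r. reflexivity.
  - exists 1. intros x. simpl. unfold dnorm; simpl. rewrite norm0.
    eapply Rle_trans; [apply l2_le_sum; [lra|apply bnorm_ge0]|lra].
Qed.

Lemma bl_pair (f1 : U -> V) (f2 : U -> W) : bounded_linear f1 -> bounded_linear f2 ->
  bounded_linear (fun u => ((f1 u, f2 u) : dsum V W)).
Proof.
  intros H1 H2. split; [|split].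
  - intros x y. simpl. rewrite (bl_add f1 H1), (bl_add f2 H2). reflexivity.
  - intros a x. simpl. rewrite (bl_scal f1 H1), (bl_scal f2 H2). reflexivity.
  - destruct (bl_bound f1 H1) as [M1 [HM1 HB1]]. destruct (bl_bound f2 H2) as [M2 [HM2 HB2]].
    exists (M1 + M2). intros x. simpl. unfold dnorm. simpl.
    eapply Rle_trans; [apply l2_le_sum; apply bnorm_ge0|].
    specialize (HB1 x). specialize (HB2 x). lra.
Qed.

Lemma bl_into_sub (M : ClosedSubspace V) (g : U -> V) (h : forall u, smem M (g u)) :
  bounded_linear g -> bounded_linear (fun u => (exist _ (g u) (h u) : subBanach V M)).
Proof.
  intros Hg. split; [|split].
  - intros x y. apply sig_eq. simpl. apply (bl_add g Hg).
  - intros a x. apply sig_eq. simpl. apply (bl_scal g Hg).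
  - destruct (bl_bound g Hg) as [M0 [H0 HM]]. exists M0. intros x. simpl. apply HM.
Qed.
End DirectSumMaps.

Lemma isomorphic_of_bounded_below (U V : Banach) (f : U -> V) : bounded_linear f ->
  (forall v, exists u, f u = v) -> (exists C, forall u, bnorm u <= C * bnorm (f u)) ->
  isomorphic V U.
Proof.
  intros Hf Hs [C HC].
  assert (Hinj : forall u u', f u = f u' -> u = u').
  { intros u u' E. apply norm_eq0_sub. apply Rle_antisym; [|apply bnorm_ge0].
    eapply Rle_trans; [apply HC|]. rewrite (bl_sub f Hf), E, subrr, norm0. lra. }
  apply choice in Hs. destruct Hs as [g Hg].
  exists g. split.
  - split; [|split].
    + intros x y. apply Hinj. rewrite (bl_add f Hf), !Hg. auto.
    + intros a x. apply Hinj. rewrite (bl_scal f Hf), !Hg. auto.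
    + exists C. intros x. rewrite <- (Hg x) at 2. apply HC.
  - exists f. split; [exact Hf|]. split; [exact Hg|]. intros u. apply Hinj. rewrite Hg. reflexivity.
Qed.

Section ImageSplitting.
Variables (X Y : Banach) (a : Y -> X) (Ran : Y -> Prop) (N : ClosedSubspace Y) (p : Y -> Y).
Variable C : R.
Hypotheses (Ha : bounded_linear a) (HRs : is_subspace Ran) (HRc : is_closed Ran).
Hypotheses (Hp : bounded_linear p) (HpR : forall y, Ran (p y)) (HpN : forall y, smem N (y -: p y)).
Hypothesis Hpid : forall r n, Ran r -> smem N n -> p (r +: n) = r.
Hypotheses (HC : 0 < C) (Hlow : forall r, Ran r -> bnorm r <= C * bnorm (a r)).

Let image x := exists r, Ran r /\ x = a r.

Lemma image_subspace : is_subspace image.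
Proof.
  split; [|split].
  - exists bzero. split; [apply HRs|]. symmetry; apply bl_0, Ha.
  - intros x y [r [Hr ->]] [r' [Hr' ->]]. exists (r +: r'). split; [apply subspace_add; auto|].
    symmetry; apply bl_add, Ha.
  - intros s x [r [Hr ->]]. exists (bscal s r). split; [apply subspace_scal; auto|].
    symmetry; apply bl_scal, Ha.
Qed.

(** Preimages in [Ran] of a Cauchy sequence of [image] are Cauchy, as [a] is bounded below. *)
Lemma image_closed : is_closed image.
Proof.
  intros u l Hu Hconv. apply choice in Hu. destruct Hu as [r Hr].
  assert (Hcau : exists rl, converges r rl).
  { apply bcomplete. intros e He.
    destruct (converges_cauchy u l Hconv (e / C)) as [K HK]; [apply Rdiv_lt_0_compat; auto|].
    exists K. intros i j Hi Hj. eapply Rle_lt_trans.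
    - apply Hlow, subspace_sub; auto; apply Hr.
    - rewrite (bl_sub a Ha), <- !(proj2 (Hr _)). specialize (HK i j Hi Hj).
      apply Rmult_lt_compat_l with (r := C) in HK; auto.
      replace (C * (e / C)) with e in HK by (field; lra). exact HK. }
  destruct Hcau as [rl Hrl]. exists rl. split; [apply (HRc r); auto; intros; apply Hr|].
  apply (converges_unique u); [exact Hconv|].
  eapply converges_ext; [|apply (bl_converges a _ _ Ha Hrl)]. intros n. symmetry; apply Hr.
Qed.

Lemma isomorphic_image_sum :
  isomorphic (dsum (subBanach X (closed_subspace image image_subspace image_closed))
                   (subBanach Y N)) Y.
Proof.
  set (M := closed_subspace image image_subspace image_closed).
  assert (HpM : forall y, smem M (a (p y))) by (intros y; exists (p y); split; auto).
  apply (isomorphic_of_bounded_below Y (dsum (subBanach X M) (subBanach Y N))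
    (fun y => ((exist _ (a (p y)) (HpM y) : subBanach X M),
               (exist _ (y -: p y) (HpN y) : subBanach Y N)))).
  - apply bl_pair.
    + apply (bl_into_sub M (fun y => a (p y))). apply bl_comp; auto.
    + apply (bl_into_sub N (fun y => y -: p y)). apply bl_sub_fun; auto. apply bl_id.
  - intros [[x [r [Hr Hx]]] [n hn]]. exists (r +: n).
    assert (E : p (r +: n) = r) by (apply Hpid; auto).
    f_equal; apply sig_eq; simpl; rewrite E; [auto|apply addKr].
  - exists (C + 1). intros y. simpl. unfold dnorm. simpl.
    set (n1 := bnorm (a (p y))). set (n2 := bnorm (y -: p y)).
    assert (H1 : n1 <= sqrt (n1 ^ 2 + n2 ^ 2)) by (apply le_l2, bnorm_ge0).
    assert (H2 : n2 <= sqrt (n1 ^ 2 + n2 ^ 2)) by (rewrite Rplus_comm; apply le_l2, bnorm_ge0).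
    assert (H3 : bnorm (p y) <= C * n1) by (apply Hlow, HpR).
    assert (H4 : bnorm y <= bnorm (p y) + n2).
    { unfold n2. rewrite <- (subKr (p y) y) at 1. apply bnorm_tri. }
    assert (H5 : C * n1 <= C * sqrt (n1 ^ 2 + n2 ^ 2)) by (apply Rmult_le_compat_l; lra).
    replace (n1 * (n1 * 1) + n2 * (n2 * 1)) with (n1 ^ 2 + n2 ^ 2) by ring. lra.
Qed.
End ImageSplitting.

Lemma splitting_of_factorization (X Y : Banach) (a : Y -> X) (L : X -> Y) (K : Y -> Y)
  (Ha : bounded_linear a) (HL : bounded_linear L) (HK : seq_compact K)
  (Hfact : forall y, y -: K y = L (a y)) :
  exists (M : ClosedSubspace X) (Z : Banach),
    finite_dimensional Z /\ isomorphic (dsum (subBanach X M) Z) Y.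
Proof.
  set (A := fun y => L (a y)).
  assert (HA : bounded_linear A) by exact (bl_comp a L Ha HL).
  assert (HAK : forall y, A y = y -: K y) by (intros y; symmetry; apply Hfact).
  destruct (riesz_index Y A K HA HK HAK) as [q [Hq [Hker Hran]]].
  set (B := Apow Y A q).
  assert (HB : bounded_linear B) by apply Apow_bl, HA.
  destruct (Apow_compact_perturbation Y A K HA HK HAK q) as [Kq [HKq HBK]].
  destruct (range_projection Y B Kq HB HKq HBK Hker Hran) as [p [Hp HpB]].
  destruct (range_bounded_below Y B Kq HB HKq HBK Hker) as [c [Hc Hcb]].
  set (L' := fun x => Apow Y A (q - 1) (L x)).
  assert (HBL : forall y, B y = L' (a y)).
  { intros y. unfold B, L'. replace q with (S (q - 1)) at 1 by lia. apply Apow_S. }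
  destruct (bl_bound L' (bl_comp L _ HL (Apow_bl Y A HA (q - 1)))) as [ML [HML HMLb]].
  assert (Hlow : forall r, range B r -> bnorm r <= c * ML * bnorm (a r)).
  { intros r [x ->]. eapply Rle_trans; [apply Hcb|]. rewrite Rmult_assoc.
    apply Rmult_le_compat_l; [lra|]. rewrite HBL. apply HMLb. }
  eexists. exists (subBanach Y (kernel_cs B HB)).
  split; [exact (kernel_finite_dimensional Y B Kq HB HKq HBK)|].
  refine (isomorphic_image_sum X Y a (range B) (kernel_cs B HB) p (c * ML) Ha
    (range_subspace B HB) (range_closed Y B Kq HB HKq HBK) Hp (fun y => proj1 (HpB y))
    _ _ ltac:(nra) Hlow).
  - intros y. cbn. unfold kernel. rewrite (bl_sub B HB), (proj2 (HpB y)). apply subrr.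
  - intros r n Hr Hn. apply (range_inj Y B HB Hker); [apply HpB|exact Hr|].
    rewrite (proj2 (HpB _)), (bl_add B HB), Hn, addr0. reflexivity.
Qed.

(** From [(T (+) 1) = E (S (+) 1) F], writing [G] for the inverse of [F]: for [y] in [Y] the
    point [g := G (y, 0)] satisfies [snd g = snd (E (S y, 0))], so splitting [g] into its two
    components gives [y = L (a y) + K y] with [a y := fst g], [L x := fst (F (x, 0))] and
    [K := fst (F (0, snd (E (_, 0)))) o S]. *)
Lemma equivalent_after_extension_factorization (X Y : Banach) (T : X -> X) (S : Y -> Y) :
  bounded_linear S -> compact_op S -> equivalent_after_extension T S ->
  exists (a : Y -> X) (L : X -> Y) (K : Y -> Y), bounded_linear a /\ bounded_linear L /\
    seq_compact K /\ forall y, y -: K y = L (a y).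
Proof.
  intros HS HSc [X' [Y' [E [F [[HE _] [[HF [G [HG [_ HFG]]]] HTS]]]]]].
  set (a := fun y : Y => fst (G ((y, bzero) : dsum Y Y'))).
  set (L := fun x : X => fst (F ((x, bzero) : dsum X X'))).
  set (G2 := fun z : Y => fst (F ((bzero, snd (E ((z, bzero) : dsum Y Y'))) : dsum X X'))).
  exists a, L, (fun y => G2 (S y)). split; [|split; [|split]].
  - exact (bl_comp _ _ (bl_comp _ _ bl_inl HG) bl_fst).
  - exact (bl_comp _ _ (bl_comp _ _ bl_inl HF) bl_fst).
  - apply seq_compact_comp_l; [apply compact_op_seq_compact; auto|].
    exact (bl_comp _ _ (bl_comp _ _ (bl_comp _ _ (bl_comp _ _ (bl_comp _ _ bl_inl HE)
      bl_snd) bl_inr) HF) bl_fst).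
  - intros y. set (g := G ((y, bzero) : dsum Y Y')).
    assert (HFg : F g = ((y, bzero) : dsum Y Y')) by apply HFG.
    assert (Hg2 : snd g = snd (E ((S y, bzero) : dsum Y Y'))).
    { pose proof (HTS g) as H. rewrite HFg in H. simpl in H. rewrite <- H. reflexivity. }
    assert (Hsplit : g = ((fst g, bzero) : dsum X X') +: ((bzero, snd g) : dsum X X')).
    { destruct g as [g1 g2]. simpl. rewrite addr0, badd_0. reflexivity. }
    assert (Hy : y = L (a y) +: G2 (S y)).
    { unfold L, a, G2. fold g. rewrite <- Hg2.
      change (y = fst (F ((fst g, bzero) : dsum X X') +: F ((bzero, snd g) : dsum X X'))).
      rewrite <- (bl_add F HF), <- Hsplit, HFg. reflexivity. }
    rewrite Hy at 1. apply addrK.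
Qed.

Theorem proposition5p6 (P : Banach -> Prop) (HP : banach_property P)
  (X Y : Banach) (T : X -> X) (S : Y -> Y)
  (HT : bounded_linear T) (HS : bounded_linear S)
  (Heq : equivalent_after_extension T S) (HSc : compact_op S)
  (Hsub : transfers_to_closed_subspaces P X)
  (Hfin : preserved_under_findim_sums P) :
  P Y.
Proof.
  destruct (equivalent_after_extension_factorization X Y T S HS HSc Heq)
    as [a [L [K [Ha [HL [HK Hfact]]]]]].
  destruct (splitting_of_factorization X Y a L K Ha HL HK Hfact) as [M [Z [HZ Hiso]]].
  apply (HP (dsum (subBanach X M) Z) Y Hiso). apply Hfin; auto.
Qed.
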